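(* In the setting below, the vector $R=1\otimes e^{-\lambda_1+\lambda_6}+1\otimes e^{\lambda_3-\lambda_5}-1\otimes e^{\lambda_1-\lambda_3+\lambda_5-\lambda_6}\in V^{\Lambda_1}$ is a highest weight vector of type $Vir(\tfrac45,\tfrac23)\otimes W^{\Omega_0}$, i.e. it satisfies (HW1)–(HW5) with $h=2/3$ and $\omega_j=0$.
   Context: Setting. $Q$ is the $E_6$ root lattice with simple roots $\alpha_1,\dots,\alpha_6$ (Dynkin chain $\alpha_1-\alpha_3-\alpha_4-\alpha_5-\alpha_6$, $\alpha_2$ attached to $\alpha_4$), form from the Cartan matrix, fundamental weights $\lambda_i$, $P=\bigoplus\mathbb Z\lambda_i$, $\mathfrak h=\mathbb C\otimes P$. $\varepsilon$ bimultiplicative on $P$ with $[\varepsilon(\lambda_i,\lambda_j)]$ rows $(1,1,1,1,1,1)$, $(-1,1,1,1,1,-1)$, $(-1,1,1,1,1,1)$, $(1,-1,1,1,1,1)$, $(1,1,1,1,1,-1)$, $(1,1,1,1,1,1)$. $V_P=S(\hat{\mathfrak h}^-)\otimes\mathbb C[P]$ with Heisenberg operators $h(n)$ ($[h(m),h'(n)]=m\langle h,h'\rangle\delta_{m+n,0}$, $h(n)1=0$ for $n>0$, $h(0)(u\otimes e^\beta)=\langle h,\beta\rangle u\otimes e^\beta$). For $\alpha\in Q$, acting on $V_P$: $Y(1\otimes e^\alpha,z)=\exp(\sum_{k\ge1}\frac{\alpha(-k)}kz^k)\exp(-\sum_{k\ge1}\frac{\alpha(k)}kz^{-k})e_\alpha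 z^{\alpha(0)}=\sum_n\{1\otimes e^\alpha\}_nz^{-n-1}$, $e_\alpha(u\otimes e^\beta)=\varepsilon(\alpha,\beta)u\otimes e^{\alpha+\beta}$, $z^{\alpha(0)}(u\otimes e^\beta)=z^{\langle\alpha,\beta\rangle}u\otimes e^\beta$; $Y(h_1(-1)\cdots h_k(-1)\otimes e^\alpha,z)=\,:h_1(z)\cdots h_k(z)Y(1\otimes e^\alpha,z):$, $h(z)=\sum_nh(n)z^{-n-1}$. $V^{\Lambda_1}$ is spanned by $S(\hat{\mathfrak h}^-)\otimes e^\nu$, $\nu\in\lambda_1+Q$. $\tau$: $\alpha_1\leftrightarrow\alpha_6$, $\alpha_3\leftrightarrow\alpha_5$ ($\lambda_1\leftrightarrow\lambda_6$, $\lambda_3\leftrightarrow\lambda_5$); $\mathrm{Proj}(\nu)=(\nu+\tau\nu)/2$. $\theta=\alpha_1+2\alpha_2+2\alpha_3+3\alpha_4+2\alpha_5+\alpha_6$. Raising operators of $\tilde{\mathfrak a}$ ($F_4^{(1)}$): $\{\beta_1\}_0=\{1\otimes e^{\alpha_2}\}_0$, $\{\beta_2\}_0=\{1\otimes e^{\alpha_4}\}_0$, $\{\beta_3\}_0=\{1\otimes e^{\alpha_3}\}_0+\{1\otimes e^{\alpha_5}\}_0$, $\{\beta_4\}_0=\{1\otimes e^{\alpha_1}\}_0+\{1\otimes e^{\alpha_6}\}_0$, $\{1\otimes e^{-\theta}\}_1$. Coset conformal vector $\omega=\frac1{10}[(-\lambda_1+\lambda_6)(-1)^2+(\lambda_3-\lambda_5)(-1)^2+(\lambda_1-\lambda_3+\lambda_5-\lambda_6)(-1)^2]\otimes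 e^0+\frac15(-1\otimes e^{\pm\gamma_1}-1\otimes e^{\pm\gamma_2}+1\otimes e^{\pm\gamma_3})$, $\gamma_1=\alpha_1-\alpha_6$, $\gamma_2=\alpha_3-\alpha_5$, $\gamma_3=\gamma_1+\gamma_2$, $1\otimes e^{\pm\gamma}:=1\otimes e^\gamma+1\otimes e^{-\gamma}$; $L(n)=\{\omega\}_{n+1}$ on $V_P$ (Virasoro, $c=4/5$, commuting with $\tilde{\mathfrak a}$). $\Omega_0$ is the basic level one $F_4^{(1)}$ weight and $W^{\Omega_0}$ its irreducible module. A nonzero $v$ is a highest weight vector of type $Vir(\frac45,h)\otimes W^{\Omega_j}$ if (HW1) $\{1\otimes e^{-\theta}\}_1v=0$; (HW2) $\{\beta_i\}_0v=0$, $i=1,\dots,4$; (HW3) $L(1)v=L(2)v=0$; (HW4) $L(0)v=hv$; (HW5) $v\in\bigoplus_kS(\hat{\mathfrak h}^-)\otimes e^{\nu_k}$ with $\mathrm{Proj}(\nu_k)=\omega_j$ ($\omega_0=0$). *)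

(* Concrete model of the lattice VOA V_P for P = E6 weight
   lattice, with just the vertex-operator modes needed for Lemma 6.15. *)
From HB Require Import structures.
From mathcomp Require Import all_boot all_algebra.
Set Implicit Arguments. Unset Strict Implicit. Unset Printing Implicit Defensive.
Import GRing.Theory Num.Theory.
Local Open Scope ring_scope.

(* Elements of P are written in the basis of fundamental weights lambda_1..6
   (index i : 'I_6 stands for lambda_{i+1}); elements of Q are written in the
   basis of simple roots alpha_1..6. *)
Definition lat := 'rV[int]_6.
Definition rowI (s : seq int) : 'rV[int]_6 := \row_(i < 6) nth 0 s i.

Definition e6edge (i j : nat) : bool :=
  (i, j) \in [:: (0,2); (2,3); (1,3); (3,4); (4,5); (2,0); (3,2); (3,1); (4,3); (5,4)]%N.
(* Cartan matrix (symmetric); alpha_i = sum_j cartan i j * lambda_j *)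
Definition cartan : 'M[int]_6 :=
  \matrix_(i < 6, j < 6) (if i == j then 2 else if e6edge i j then -1 else 0).
(* root-lattice coordinates  ->  weight-lattice coordinates *)
Definition rootP (a : 'rV[int]_6) : lat := a *m cartan.
(* 3 * inverse Cartan matrix = 3 * Gram matrix <lambda_i, lambda_j> *)
Definition invc3 : 'M[int]_6 := \matrix_(i < 6, j < 6)
  nth 0 (nth [::] [:: [:: 4; 3; 5; 6; 4; 2]; [:: 3; 6; 6; 9; 6; 3];
                     [:: 5; 6; 10; 12; 8; 4]; [:: 6; 9; 12; 18; 12; 6];
                     [:: 4; 6; 8; 12; 10; 5]; [:: 2; 3; 4; 6; 5; 4]] i) j.
(* <alpha, beta> for alpha in Q (root coords), beta in P (weight coords) *)
Definition ipair (a : 'rV[int]_6) (b : lat) : int := \sum_(i < 6) a 0 i * b 0 i.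
(* the 2-cocycle: eps(lambda_i,lambda_j) = -1 exactly at these positions *)
Definition epsneg (i j : 'I_6) : bool :=
  ((i : nat), (j : nat)) \in [:: (1,0); (1,5); (2,0); (3,1); (4,5)]%N.
Definition eps {F : numFieldType} (b c : lat) : F :=
  (-1) ^ (\sum_(i < 6) \sum_(j < 6) (if epsneg i j then b 0 i * c 0 j else 0)).
Definition tauP (b : lat) : lat :=
  \row_(i < 6) b 0 (inord (nth 0%N [:: 5; 1; 4; 3; 2; 0]%N i)).

(* elements of h as coordinate rows in the lambda basis *)
Definition hP {F : numFieldType} (b : lat) : 'rV[F]_6 := map_mx (fun z => z%:~R) b.
Definition rowF {F : numFieldType} (s : seq int) : 'rV[F]_6 := hP (rowI s).
Definition hl {F : numFieldType} (h : 'rV[F]_6) (j : 'I_6) : F :=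
  \sum_(i < 6) h 0 i * ((invc3 i j)%:~R / 3%:R).
Definition hpair {F : numFieldType} (h : 'rV[F]_6) (b : lat) : F :=
  \sum_(j < 6) hl h j * (b 0 j)%:~R.

(* A monomial of S(h^-) is a multiset of generators lambda_i(-k), k >= 1,
   represented by a list of pairs (i,k) (order irrelevant).  A vector is a
   finite formal sum of terms  c * monomial (x) e^beta.                     *)
Definition mono := seq ('I_6 * nat).
Definition term (F : numFieldType) := (F * (mono * lat))%type.
Definition state (F : numFieldType) := seq (term F).
(* coefficient of  m (x) e^b  in v (this is the semantics of a state) *)
Definition coeff {F : numFieldType} (v : state F) (m : mono) (b : lat) : F :=
  \sum_(t <- v | perm_eq t.2.1 m && (t.2.2 == b)) t.1.
Definition vzero {F : numFieldType} (v : state F) : Prop :=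
  forall m b, coeff v m b = 0.
Definition veq {F : numFieldType} (v w : state F) : Prop :=
  forall m b, coeff v m b = coeff w m b.
Definition scale {F : numFieldType} (c : F) (v : state F) : state F :=
  [seq (c * t.1, t.2) | t <- v].
Definition lift {F : numFieldType} (f : term F -> state F) (v : state F) : state F :=
  flatten [seq f t | t <- v].
Definition deg_m (m : mono) : nat := sumn [seq p.2 | p <- m].

Definition drop_at (j : nat) (m : mono) : mono := take j m ++ drop j.+1 m.
(* h(-k), k >= 1: multiplication by sum_i h_i lambda_i(-k) *)
Definition hcreate {F : numFieldType} (k : nat) (h : 'rV[F]_6) (t : term F) : state F :=
  [seq (t.1 * h 0 i, ((i, k) :: t.2.1, t.2.2)) | i <- enum 'I_6].
(* h(k), k >= 1: the derivation  lambda_i(-k) |-> k <h, lambda_i> *)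
Definition hannih {F : numFieldType} (k : nat) (h : 'rV[F]_6) (t : term F) : state F :=
  [seq (t.1 * k%:R * hl h (nth (ord0, 0%N) t.2.1 j).1, (drop_at j t.2.1, t.2.2))
  | j <- iota 0 (size t.2.1) & (nth (ord0, 0%N) t.2.1 j).2 == k].
Definition hzero {F : numFieldType} (h : 'rV[F]_6) (t : term F) : state F :=
  [:: (t.1 * hpair h t.2.2, t.2)].
Definition hmode {F : numFieldType} (h : 'rV[F]_6) (n : int) : state F -> state F :=
  lift (match n with
        | Posz 0 => hzero h
        | Posz k.+1 => hannih k.+1 h
        | Negz k => hcreate k.+1 h
        end).

(* ---------- coefficients of exp(sum_{k>=1} x_k z^k / k) ---------- *)
Fixpoint schurs {F : numFieldType} (x : nat -> state F -> state F) (a : nat)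
  : seq (state F -> state F) :=
  match a with
  | 0 => [:: id]
  | a'.+1 => let prev := schurs x a' in
      rcons prev (fun v => scale (a'.+1%:R)^-1
        (flatten [seq x k.+1 (nth id prev (a' - k) v) | k <- iota 0 a'.+1]))
  end.
Definition schur {F : numFieldType} (x : nat -> state F -> state F) (a : nat) :=
  nth id (schurs x a) a.

(* Y(1(x)e^alpha,z) = E^-(z) E^+(z) e_alpha z^{alpha(0)}; on a term
   u (x) e^beta the z^{-n-1} coefficient is
   sum_b eps(alpha,beta) E^-_{p} E^+_{b} u (x) e^{alpha+beta},
   with p = b - <alpha,beta> - n - 1, where E^-_p is the z^p coefficient of
   exp(sum alpha(-k) z^k/k) and E^+_b the z^{-b} coefficient of
   exp(-sum alpha(k) z^{-k}/k); E^+_b u = 0 for b > deg u. *)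
Definition Ymode_e_term {F : numFieldType} (a : 'rV[int]_6) (n : int) (t : term F)
  : state F :=
  let al := rootP a in
  let alF : 'rV[F]_6 := hP al in
  let u : state F := [:: (eps al t.2.2 * t.1, (t.2.1, al + t.2.2))] in
  flatten [seq (match (b%:Z - ipair a t.2.2 - n - 1) with
                | Posz p => schur (fun k => hmode alF (- k%:Z)) p
                              (schur (fun k v => scale (-1) (hmode alF k%:Z v)) b u)
                | Negz _ => [::]
                end) | b <- iota 0 (deg_m t.2.1).+1].
Definition Ymode_e {F : numFieldType} (a : 'rV[int]_6) (n : int) : state F -> state F :=
  lift (Ymode_e_term a n).

(* {h1(-1)h2(-1)1}_m = sum_{p+q=m-1} :h1(p)h2(q):, normal ordering putting
   h(n), n>=0, to the right; on a term only p in [-N, deg] contribute. *)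
Definition Ymode_hh_term {F : numFieldType} (h1 h2 : 'rV[F]_6) (m : int) (t : term F)
  : state F :=
  let d := deg_m t.2.1 in
  let N := (d + absz m + 1)%N in
  flatten [seq (let p := (i%:Z - N%:Z) in let q := m - 1 - p in
                if 0 <= p then hmode h2 q (hmode h1 p [:: t])
                else hmode h1 p (hmode h2 q [:: t])) | i <- iota 0 (N + d).+1].
Definition Ymode_hh {F : numFieldType} (h1 h2 : 'rV[F]_6) (m : int) : state F -> state F :=
  lift (Ymode_hh_term h1 h2 m).

(* ---------- the coset Virasoro L(n) = {omega}_{n+1} ---------- *)
Definition gam1 : 'rV[int]_6 := rowI [:: 1; 0; 0; 0; 0; -1].
Definition gam2 : 'rV[int]_6 := rowI [:: 0; 0; 1; 0; -1; 0].
Definition gam3 : 'rV[int]_6 := gam1 + gam2.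
Definition Lmode {F : numFieldType} (n : int) (v : state F) : state F :=
  let hA : 'rV[F]_6 := rowF [:: -1; 0; 0; 0; 0; 1] in
  let hB : 'rV[F]_6 := rowF [:: 0; 0; 1; 0; -1; 0] in
  let hC : 'rV[F]_6 := rowF [:: 1; 0; -1; 0; 1; -1] in
  let m := n + 1 in
  scale (10%:R)^-1 (Ymode_hh hA hA m v ++ Ymode_hh hB hB m v ++ Ymode_hh hC hC m v)
  ++ scale (5%:R)^-1
       (scale (-1) (Ymode_e gam1 m v ++ Ymode_e (- gam1) m v
                    ++ Ymode_e gam2 m v ++ Ymode_e (- gam2) m v)
        ++ Ymode_e gam3 m v ++ Ymode_e (- gam3) m v).

Definition aroot (i : nat) : 'rV[int]_6 := \row_(j < 6) (if (j == i :> nat) then 1 else 0).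
Definition theta : 'rV[int]_6 := rowI [:: 1; 2; 2; 3; 2; 1].
Definition beta_op {F : numFieldType} (i : nat) (v : state F) : state F :=
  match i with
  | 1 => Ymode_e (aroot 1) 0 v
  | 2 => Ymode_e (aroot 3) 0 v
  | 3 => Ymode_e (aroot 2) 0 v ++ Ymode_e (aroot 4) 0 v
  | _ => Ymode_e (aroot 0) 0 v ++ Ymode_e (aroot 5) 0 v
  end.

Definition in_VLambda1 {F : numFieldType} (v : state F) : Prop :=
  forall m b, coeff v m b != 0 -> exists a : 'rV[int]_6, b = rowI [:: 1; 0; 0; 0; 0; 0] + rootP a.
(* type Vir(4/5,h) (x) W^{Omega_j}, with omega_j given in weight coordinates:
   Proj(nu) = omega_j  iff  nu + tau nu = 2 omega_j *)
Definition hw_vector {F : numFieldType} (v : state F) (h : F) (omj : lat) : Prop :=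
  ~ vzero v /\
  vzero (Ymode_e (- theta) 1 v) /\
  (forall i, (1 <= i <= 4)%N -> vzero (beta_op i v)) /\
  (vzero (Lmode 1 v) /\ vzero (Lmode 2 v)) /\
  veq (Lmode 0 v) (scale h v) /\
  (forall m b, coeff v m b != 0 -> b + tauP b = omj *+ 2).

Definition Rvec (F : numFieldType) : state F :=
  [:: (1, ([::], rowI [:: -1; 0; 0; 0; 0; 1]));
      (1, ([::], rowI [:: 0; 0; 1; 0; -1; 0]));
      (-1, ([::], rowI [:: 1; 0; -1; 0; 1; -1]))].

(* R is the sum of three vacuum vectors ±e^ν, ν = -λ1+λ6, λ3-λ5, λ1-λ3+λ5-λ6,
   which lie in λ1 + Q and satisfy τν = -ν.  Positive Heisenberg modes kill e^ν,
   so {e^α}_n e^ν vanishes when <α,ν> + n + 1 > 0 and equals ε(α,ν) e^(α+ν) when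
   it is 0.  As <θ,ν> = 0 and |<γ_i,ν>| <= 2, every nonnegative mode of e^(-θ)
   and every L(n), n >= 1, kills R outright; for the raising operators the
   surviving terms cancel in pairs thanks to the signs ε, and L(0) R = 2/3 R is
   a computation inside the span of the e^ν. *)

From mathcomp Require Import all_boot all_order all_algebra zify ring.
Set Implicit Arguments. Unset Strict Implicit. Unset Printing Implicit Defensive.
Import Order.TTheory GRing.Theory Num.Theory.
Local Open Scope ring_scope.

(* [normal_form x] is [x]; the coordinate lemmas wrap their closed integer
   results in it so that [normalize] evaluates exactly those subterms by
   [vm_compute] (matrices themselves do not compute). *)
Definition normal_form {A : Type} (x : A) := x.

Ltac normalize_step := match goal with |- context [normal_form ?x] =>
  lazymatch x with context [rowI _] => fail | _ => idtac end;
  let v := eval vm_compute in x in rewrite (_ : normal_form x = v); [|by vm_compute] end.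
Ltac normalize := repeat normalize_step.

Ltac ext6 := let i := fresh in apply/rowP => i; rewrite ?mxE;
  case: i => [[|[|[|[|[|[|?]]]]]] ?] //=.

Lemma rootP_rowI a0 a1 a2 a3 a4 a5 : rootP (rowI [:: a0; a1; a2; a3; a4; a5]) =
  rowI (normal_form [:: 2*a0 - a2; 2*a1 - a3; 2*a2 - a0 - a3;
                        2*a3 - a1 - a2 - a4; 2*a4 - a3 - a5; 2*a5 - a4]).
Proof.
apply/rowP => i; rewrite !mxE !big_ord_recl big_ord0 !mxE /=.
case: i => [[|[|[|[|[|[|?]]]]]] ?] //=; rewrite /e6edge /=; lia.
Qed.

Lemma rowI_add a0 a1 a2 a3 a4 a5 b0 b1 b2 b3 b4 b5 :
  rowI [:: a0; a1; a2; a3; a4; a5] + rowI [:: b0; b1; b2; b3; b4; b5] =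
  rowI (normal_form [:: a0 + b0; a1 + b1; a2 + b2; a3 + b3; a4 + b4; a5 + b5]).
Proof. by ext6. Qed.

Lemma rowI_opp a0 a1 a2 a3 a4 a5 :
  - rowI [:: a0; a1; a2; a3; a4; a5] = rowI (normal_form [:: -a0; -a1; -a2; -a3; -a4; -a5]).
Proof. by ext6. Qed.

Lemma rowI_eq a0 a1 a2 a3 a4 a5 b0 b1 b2 b3 b4 b5 :
  (rowI [:: a0; a1; a2; a3; a4; a5] == rowI [:: b0; b1; b2; b3; b4; b5]) =
  normal_form [&& a0 == b0, a1 == b1, a2 == b2, a3 == b3, a4 == b4 & a5 == b5].
Proof.
apply/eqP/idP => [E | /and5P[/eqP-> /eqP-> /eqP-> /eqP-> /andP[/eqP-> /eqP->]] //].
have e i := congr1 (fun M : lat => M 0 i) E.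
move: (e ord0) (e (inord 1)) (e (inord 2)) (e (inord 3)) (e (inord 4)) (e (inord 5)).
by rewrite !mxE !inordK //= => -> -> -> -> -> ->; rewrite /normal_form !eqxx.
Qed.

Lemma tauP_rowI a0 a1 a2 a3 a4 a5 :
  tauP (rowI [:: a0; a1; a2; a3; a4; a5]) = rowI [:: a5; a1; a4; a3; a2; a0].
Proof. by ext6; rewrite inordK. Qed.

Lemma ipair_rowI a0 a1 a2 a3 a4 a5 b0 b1 b2 b3 b4 b5 :
  ipair (rowI [:: a0; a1; a2; a3; a4; a5]) (rowI [:: b0; b1; b2; b3; b4; b5]) =
  normal_form (a0*b0 + a1*b1 + a2*b2 + a3*b3 + a4*b4 + a5*b5).
Proof. by rewrite /ipair !big_ord_recl big_ord0 !mxE /= /normal_form; ring. Qed.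

Lemma eps_rowI (F : numFieldType) a0 a1 a2 a3 a4 a5 b0 b1 b2 b3 b4 b5 :
  @eps F (rowI [:: a0; a1; a2; a3; a4; a5]) (rowI [:: b0; b1; b2; b3; b4; b5]) =
  if normal_form (odd (absz (a1*b0 + a1*b5 + a2*b0 + a3*b1 + a4*b5))) then -1 else 1.
Proof.
rewrite /eps !big_ord_recl !big_ord0 /epsneg /= !mxE /=.
set z := (X in (-1) ^ X).
have -> : z = a1*b0 + a1*b5 + a2*b0 + a3*b1 + a4*b5 by rewrite /z; ring.
rewrite /normal_form; case: (_ + _) => n /=.
  by rewrite (_ : (-1 : F) ^ Posz n = (-1) ^+ n) // -signr_odd; case: odd.
rewrite (_ : (-1 : F) ^ Negz n = ((-1) ^+ n.+1)^-1) // -signr_odd /=.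
by case: odd; rewrite /= ?invrN1 ?invr1.
Qed.

Lemma aroot_rowI i : aroot i = rowI (normal_form [seq (if j == i then 1 else 0) | j <- iota 0 6]).
Proof. by ext6. Qed.

Lemma hpair_rowI (F : numFieldType) a0 a1 a2 a3 a4 a5 b0 b1 b2 b3 b4 b5 :
  hpair (@hP F (rowI [:: a0; a1; a2; a3; a4; a5])) (rowI [:: b0; b1; b2; b3; b4; b5]) =
  (normal_form (a0 * (4*b0 + 3*b1 + 5*b2 + 6*b3 + 4*b4 + 2*b5)
              + a1 * (3*b0 + 6*b1 + 6*b2 + 9*b3 + 6*b4 + 3*b5)
              + a2 * (5*b0 + 6*b1 + 10*b2 + 12*b3 + 8*b4 + 4*b5)
              + a3 * (6*b0 + 9*b1 + 12*b2 + 18*b3 + 12*b4 + 6*b5)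
              + a4 * (4*b0 + 6*b1 + 8*b2 + 12*b3 + 10*b4 + 5*b5)
              + a5 * (2*b0 + 3*b1 + 4*b2 + 6*b3 + 5*b4 + 4*b5)))%:~R / 3%:R.
Proof. by rewrite /hpair /hl !big_ord_recl !big_ord0 !mxE /= /normal_form; field. Qed.

Section States.
Variable F : numFieldType.
Implicit Types (v w : state F) (t : term F).

Lemma lift_cons f t v : lift f (t :: v) = f t ++ lift f v. Proof. by []. Qed.
Lemma lift_nil f : lift f [::] = [::] :> state F. Proof. by []. Qed.
Lemma scale_cat c v w : scale c (v ++ w) = scale c v ++ scale c w.
Proof. by rewrite /scale map_cat. Qed.
Lemma scale_cons c t v : scale c (t :: v) = (c * t.1, t.2) :: scale c v.
Proof. by []. Qed.
Lemma scale_nil c : scale c [::] = [::] :> state F. Proof. by []. Qed.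
Lemma coeff_cat v w m b : coeff (v ++ w) m b = coeff v m b + coeff w m b.
Proof. by rewrite /coeff big_cat. Qed.
Lemma coeff_cons t v m b : coeff (t :: v) m b =
  (if perm_eq t.2.1 m && (t.2.2 == b) then t.1 else 0) + coeff v m b.
Proof. by rewrite /coeff big_cons; case: ifP => _ //; rewrite add0r. Qed.
Lemma coeff_nil m b : coeff ([::] : state F) m b = 0.
Proof. by rewrite /coeff big_nil. Qed.
Lemma vzero_nil : vzero ([::] : state F).
Proof. exact: coeff_nil. Qed.

Lemma coeff_support v m b :
  coeff v m b != 0 -> b \in [seq t.2.2 | t <- v].
Proof.
elim: v => [|t v IHv]; first by rewrite coeff_nil eqxx.
rewrite coeff_cons /= inE; case: (t.2.2 =P b) => [-> | _]; first by rewrite eqxx.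
by rewrite andbF add0r => /IHv ->; rewrite orbT.
Qed.
End States.

Section Vacuum.
Variable F : numFieldType.

Lemma schur0 (x : nat -> state F -> state F) : schur x 0 = id.
Proof. by []. Qed.

(* E^+ kills the vacuum, so only the b = 0 summand of the mode survives. *)
Lemma Ymode_e_term_vacuum a n (c : F) B :
  Ymode_e_term a n (c, ([::], B)) =
  match normal_form (- ipair a B - n - 1) with
  | Posz p => schur (fun k => hmode (hP (rootP a)) (- k%:Z)) p
                [:: (eps (rootP a) B * c, ([::], rootP a + B))]
  | Negz _ => [::]
  end.
Proof. by rewrite /Ymode_e_term /= cats0 sub0r. Qed.

Lemma Ymode_e_term_vacuum_eq0 a n (c : F) B :
  0 < ipair a B + n + 1 -> Ymode_e_term a n (c, ([::], B)) = [::].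
Proof.
move=> pos; rewrite Ymode_e_term_vacuum.
have : - ipair a B - n - 1 < 0 by lia.
by rewrite /normal_form; case: (- _ - _ - _) => // p; lia.
Qed.

Lemma hmode_pos_vacuum (h : 'rV[F]_6) q c B : 0 < q -> hmode h q [:: (c, ([::], B))] = [::].
Proof. by case: q => [[|k]|k]. Qed.

Lemma Ymode_hh_term_vacuum1 (h1 h2 : 'rV[F]_6) c B :
  Ymode_hh_term h1 h2 1 (c, ([::], B)) = [:: (c * hpair h1 B * hpair h2 B, ([::], B))].
Proof. by []. Qed.

(* In each summand of :h1(p) h2(q):, p + q = m - 1 > 0, a positive mode acts first. *)
Lemma Ymode_hh_term_vacuum_eq0 (h1 h2 : 'rV[F]_6) m c B :
  1 < m -> Ymode_hh_term h1 h2 m (c, ([::], B)) = [::].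
Proof.
move=> m_gt1; rewrite /Ymode_hh_term; cbv zeta; rewrite [deg_m _]/= add0n.
elim: (iota 0 _) => //= i s ->; rewrite cats0.
set p := i%:Z - _; case: ifP => p_ge0.
  have [p_gt0 | p_le0] := boolP (0 < p); first by rewrite hmode_pos_vacuum.
  have -> : p = 0 by lia.
  by rewrite /= hmode_pos_vacuum //; lia.
by rewrite (hmode_pos_vacuum h2) //; move/negbT: p_ge0; rewrite /p -ltNge; lia.
Qed.
End Vacuum.

Lemma Rvec_in_VLambda1 (F : numFieldType) : in_VLambda1 (Rvec F).
Proof.
move=> m b /coeff_support; rewrite !inE => /or3P[] /eqP ->.
- by exists (rowI [:: -2; -1; -2; -2; -1; 0]); rewrite rootP_rowI; normalize; rewrite rowI_add.
- by exists (rowI [:: -1; -1; -1; -2; -2; -1]); rewrite rootP_rowI; normalize; rewrite rowI_add.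
- by exists (rowI [:: -1; -1; -2; -2; -1; -1]); rewrite rootP_rowI; normalize; rewrite rowI_add.
Qed.

Lemma Rvec_neq0 (F : numFieldType) : ~ vzero (Rvec F).
Proof.
move/(_ [::] (rowI [:: -1; 0; 0; 0; 0; 1])).
rewrite /Rvec !coeff_cons coeff_nil /= !rowI_eq; normalize.
by rewrite /= !addr0 => /eqP; rewrite oner_eq0.
Qed.

Lemma Rvec_support_proj0 (F : numFieldType) m b :
  coeff (Rvec F) m b != 0 -> b + tauP b = 0 *+ 2.
Proof.
move=> /coeff_support; rewrite !inE mul0rn => /or3P[] /eqP ->;
  by rewrite tauP_rowI rowI_add; normalize; ext6.
Qed.

Lemma Ymode_e_opp_theta_Rvec (F : numFieldType) (n : nat) : vzero (Ymode_e (- theta) n%:Z (Rvec F)).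
Proof.
rewrite /Ymode_e /Rvec /theta rowI_opp !lift_cons lift_nil; normalize.
rewrite !Ymode_e_term_vacuum_eq0.
all: try (rewrite ipair_rowI; normalize; lia).
exact: vzero_nil.
Qed.

Lemma Lmode_succ_Rvec (F : numFieldType) (n : nat) : vzero (Lmode n.+1%:Z (Rvec F)).
Proof.
rewrite /Lmode; cbv zeta; rewrite /Ymode_hh /Ymode_e /Rvec /rowF /gam3 /gam1 /gam2.
rewrite !lift_cons lift_nil ?rowI_add ?rowI_opp; normalize.
rewrite !Ymode_hh_term_vacuum_eq0; try lia.
rewrite !Ymode_e_term_vacuum_eq0.
all: try (rewrite ipair_rowI; normalize; lia).
exact: vzero_nil.
Qed.

Ltac eval_modes :=
  rewrite ?rowI_add; normalize; rewrite ?rowI_opp; normalize;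
  rewrite ?lift_cons ?lift_nil ?Ymode_e_term_vacuum ?Ymode_hh_term_vacuum1;
  (repeat (rewrite Ymode_hh_term_vacuum_eq0; [|by []]));
  rewrite ?lift_nil ?cats0 ?ipair_rowI; normalize;
  rewrite ?schur0 ?rootP_rowI; normalize;
  rewrite ?rowI_add ?eps_rowI ?hpair_rowI; normalize; cbn [andb fst snd];
  rewrite ?scale_cat ?scale_cons ?scale_nil.

Ltac split_coeff m :=
  rewrite ?coeff_cat ?coeff_cons ?coeff_nil; cbn [andb fst snd];
  try case: (perm_eq [::] m); cbn [andb fst snd];
  repeat match goal with |- context [@eq_op _ (rowI ?L) ?b] =>
    let E := fresh "E" in case E: (rowI L == b);
      [move/eqP: E => E; subst b|]; rewrite ?rowI_eq; normalize; cbn [andb fst snd] end.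

Lemma beta_op_Rvec (F : numFieldType) i : (1 <= i <= 4)%N -> vzero (beta_op i (Rvec F)).
Proof.
case: i => [|[|[|[|[|i]]]]] // _ m b; rewrite /beta_op /Ymode_e /Rvec !aroot_rowI; normalize.
all: eval_modes; split_coeff m; ring.
Qed.

Lemma Lmode0_Rvec (F : numFieldType) : veq (Lmode 0 (Rvec F)) (scale (2%:R / 3%:R) (Rvec F)).
Proof.
move=> m b; rewrite /Lmode; cbv zeta; rewrite /Ymode_hh /Ymode_e /Rvec /rowF /gam3 /gam1 /gam2.
rewrite (_ : 0 + 1 = 1 :> int) //.
eval_modes; split_coeff m; by field.
Qed.

Theorem lemma6p15 (F : numFieldType) :
  in_VLambda1 (Rvec F) /\ hw_vector (Rvec F) (2%:R / 3%:R) 0.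
Proof.
split; first exact: Rvec_in_VLambda1.
split; first exact: Rvec_neq0.
split; first exact: (Ymode_e_opp_theta_Rvec F 1).
split; first exact: beta_op_Rvec.
split; first by split; [exact: (Lmode_succ_Rvec F 0) | exact: (Lmode_succ_Rvec F 1)].
split; first exact: Lmode0_Rvec.
exact: Rvec_support_proj0.
Qed.
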